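(* Consider the $\kappa$-adaptive attack model with $\kappa>1$ and success proportion $p$, and let $A(\kappa)$ be the index of the first successful trial. Then for $a\in\{1,\dots,\lceil 2^n(1-p)/\kappa\rceil+1\}$, $$\mathbb{P}\big(A(\kappa)=a\big)=\frac{p\,2^n}{2^n-\kappa(a-1)}\cdot\frac{\binom{2^n(1-p)/\kappa}{a-1}}{\binom{2^n/\kappa}{a-1}}.$$
   Context: Model: among the $2^n$ templates of $\mathbb{Z}_2^n$, a proportion $p$ are successful (hits). A $\kappa$-adaptive attacker is one who, for each trial, is able to identify $\kappa$ non-hit templates: at each trial she guesses uniformly among the templates not yet identified as non-hits, so that given that the first $a-1$ trials failed, the $a$-th trial fails with probability $\frac{2^n(1-p)-(a-1)\kappa}{2^n-(a-1)\kappa}$. For real $x$ and integer $m\ge0$, $\binom{x}{m}=x(x-1)\cdots(x-m+1)/m!$. *)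

From HB Require Import structures.
From mathcomp Require Import all_boot all_order all_algebra.
Set Implicit Arguments. Unset Strict Implicit. Unset Printing Implicit Defensive.
Import Order.TTheory GRing.Theory Num.Theory.
Local Open Scope ring_scope.

Definition binomr {R : fieldType} (x : R) (m : nat) : R :=
  (\prod_(i < m) (x - i%:R)) / (m`!)%:R.

(* kappa-adaptive model: given that the first a-1 trials failed, the a-th
   trial fails with probability (2^n(1-p) - (a-1)kappa)/(2^n - (a-1)kappa). *)
Definition fail_prob {R : fieldType} (n : nat) (p kappa : R) (a : nat) : R :=
  (2%:R ^+ n * (1 - p) - (a.-1)%:R * kappa) / (2%:R ^+ n - (a.-1)%:R * kappa).

(* P(A(kappa) = a), by the chain rule: trials 1..a-1 fail, trial a succeeds. *)
Definition first_hit_prob {R : fieldType} (n : nat) (p kappa : R) (a : nat) : R :=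
  (\prod_(1 <= j < a) fail_prob n p kappa j) * (1 - fail_prob n p kappa a).

From HB Require Import structures.
From mathcomp Require Import all_boot all_order all_algebra.
Import Order.TTheory GRing.Theory Num.Theory.
Local Open Scope ring_scope.

(* Write N = 2^n.  Dividing numerator and denominator of the failure factor
   of trial j by kappa turns it into (N(1-p)/kappa - (j-1)) / (N/kappa - (j-1)),
   so the product over the first a-1 trials is a quotient of falling factorials
   of length a-1, i.e. of generalized binomial coefficients sharing the same
   (a-1)!; the success factor of trial a is p N / (N - (a-1) kappa). *)

Lemma binomr_divr (R : numFieldType) (x k : R) (m : nat) : k != 0 ->
  binomr (x / k) m = (\prod_(i < m) (x - i%:R * k)) / (k ^+ m * (m`!)%:R).
Proof.
move=> k0; rewrite /binomr invfM mulrA; congr (_ / _).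
rewrite -[in k ^+ m](card_ord m) -prodr_const -prodf_div; apply: eq_bigr => i _.
by rewrite mulrBl mulfK.
Qed.

Lemma binomr_divr_ratio (R : numFieldType) (x y k : R) (m : nat) : k != 0 ->
  binomr (x / k) m / binomr (y / k) m =
  \prod_(i < m) ((x - i%:R * k) / (y - i%:R * k)).
Proof.
move=> k0; have km0 : k ^+ m * (m`!)%:R != 0.
  by rewrite mulf_neq0 ?expf_neq0 // pnatr_eq0 -lt0n fact_gt0.
by rewrite !binomr_divr // invf_div mulrA mulfVK // prodf_div.
Qed.

Lemma prod_fail_prob (R : fieldType) (n : nat) (p k : R) (m : nat) :
  \prod_(1 <= j < m.+1) fail_prob n p k j =
  \prod_(i < m) ((2%:R ^+ n * (1 - p) - i%:R * k) / (2%:R ^+ n - i%:R * k)).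
Proof. by rewrite big_add1 big_mkord. Qed.

Lemma one_minus_fail_prob (R : fieldType) (n : nat) (p k : R) (m : nat) :
  2%:R ^+ n - m%:R * k != 0 ->
  1 - fail_prob n p k m.+1 = p * 2%:R ^+ n / (2%:R ^+ n - m%:R * k).
Proof.
move=> d0; rewrite /fail_prob /= -[X in X - _](divff d0) -mulrBl; congr (_ / _).
by rewrite mulrBr mulr1 opprB addrA subrK opprB addrC subrK mulrC.
Qed.

Theorem lemma4p8 (R : archiRealFieldType) (n kappa : nat) (p : R) (a : nat) :
  (1 < kappa)%N ->
  0 < p -> p <= 1 ->
  (exists h : nat, p * 2%:R ^+ n = h%:R) ->
  (* the model is well defined up to trial a: templates remain to be guessed *)
  ((a.-1) * kappa < 2 ^ n)%N ->
  (1 <= a)%N ->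
  (a%:Z <= Num.ceil (2%:R ^+ n * (1 - p) / kappa%:R) + 1)%R ->
  first_hit_prob n p kappa%:R a =
    (p * 2%:R ^+ n) / (2%:R ^+ n - kappa%:R * (a.-1)%:R)
    * (binomr (2%:R ^+ n * (1 - p) / kappa%:R) a.-1
       / binomr (2%:R ^+ n / kappa%:R) a.-1).
Proof.
(* The identity is algebraic: besides kappa != 0 it only needs the denominator
   2^n - (a-1) kappa to be nonzero. *)
move=> kappa_gt1 _ _ _; case: a => [//|m] /= templates_left _ _.
have kappa0 : kappa%:R != 0 :> R by rewrite pnatr_eq0 -lt0n ltnW.
have d0 : 2%:R ^+ n - m%:R * kappa%:R != 0 :> R.
  by rewrite subr_eq0 -natrX -natrM eqr_nat neq_ltn templates_left orbT.
rewrite /first_hit_prob prod_fail_prob one_minus_fail_prob // binomr_divr_ratio //.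
by rewrite mulrC [kappa%:R * _]mulrC.
Qed.
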